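(* Let $w$ be a weight on $\mathbb{R}^n$, let $\varphi$ be as in the context, and let $1\le q<p<\infty$. Then $A(\mathcal M^{q}(\varphi))\subset A(\mathcal M^{p}(\varphi))$; that is, if $[w]_{A(\mathcal M^{q}(\varphi))}<\infty$ then $[w]_{A(\mathcal M^{p}(\varphi))}<\infty$.
   Context: A weight is a nonnegative locally integrable function on $\mathbb{R}^n$. Let $\varphi$ be a function from the set of Euclidean balls of $\mathbb{R}^n$ to $(0,\infty)$; standing assumptions: $\varphi$ is doubling ($\varphi(2B)\le C\varphi(B)$ for all balls $B$) and reverse doubling (there are $\delta>0$, $C>0$ with $\varphi(B_1)/\varphi(B_2)\le C(|B_1|/|B_2|)^\delta$ whenever $B_1\subset B_2$ are balls), and characteristic functions of balls belong to the Morrey spaces considered. For $1\le p<\infty$, $\mathcal M^{p}(\varphi,w)$ is the space of measurable $f$ with $\|f\|_{\mathcal M^{p}(\varphi,w)}:=\sup_B\big(\varphi(B)^{-1}\int_B|f|^pw\big)^{1/p}<\infty$, the supremum over all balls. For a Banach lattice $X$ of measurable functions, its Köthe dual $X'$ consists of measurable $g$ with $\|g\|_{X'}:=\sup\{\int_{\mathbb{R}^n}|fg|: \|f\|_X\le 1\}<\infty$. Define $[w]_{A(\mathcal M^{p}(\varphi))}:=\sup_B \|\chi_B\|_{\mathcal M^{p}(\varphi,w)}\|\chi_B\|_{\mathcal M^{p}(\varphi,w)'}/|B|$ (supremum over all balls $B$), and $A(\mathcal M^{p}(\varphi))$ is the class of weights with this quantity finite. *)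

From HB Require Import structures.
From mathcomp Require Import all_boot all_order all_algebra.
From mathcomp Require Import all_classical all_reals all_analysis.
Set Implicit Arguments. Unset Strict Implicit. Unset Printing Implicit Defensive.
Import Order.TTheory GRing.Theory Num.Theory.
Local Open Scope classical_set_scope.
Local Open Scope ring_scope.

(* Points of R^n are n-tuples of reals, with the product (Borel) sigma-algebra. *)
Notation Rn R n := (n.-tuple R).

(* n-dimensional Lebesgue integral of a nonnegative function, computed as an
   iterated one-dimensional Lebesgue integral (equal to the integral against the
   n-dimensional Lebesgue measure for nonnegative measurable functions, by Tonelli). *)
Fixpoint iint {R : realType} (n : nat) : (Rn R n -> \bar R) -> \bar R :=
  match n return (Rn R n -> \bar R) -> \bar R with
  | 0 => fun F => F [tuple]
  | m.+1 => fun F =>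
      (\int[@lebesgue_measure R]_x iint (fun t : Rn R m => F [tuple of x :: t]))%E
  end.

Definition iint_on {R : realType} (n : nat) (A : set (Rn R n)) (F : Rn R n -> \bar R) :=
  iint (fun x => ((\1_A x : R)%:E * F x)%E).

Definition eball {R : realType} (n : nat) (c : Rn R n) (r : R) : set (Rn R n) :=
  [set x | \sum_(i < n) (tnth x i - tnth c i) ^+ 2 < r ^+ 2].

Definition is_eball {R : realType} (n : nat) (B : set (Rn R n)) :=
  exists c r, 0 < r /\ B = eball c r.

Definition vol {R : realType} (n : nat) (A : set (Rn R n)) : R :=
  fine (iint_on A (fun _ => 1%E)).

Definition weight {R : realType} (n : nat) (w : Rn R n -> R) :=
  measurable_fun setT w /\ (forall x, 0 <= w x) /\
  (forall B, is_eball B -> (iint_on B (fun x => (w x)%:E) < +oo)%E).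

Definition phi_admissible {R : realType} (n : nat) (phi : set (Rn R n) -> R) :=
  (forall B, is_eball B -> 0 < phi B) /\
  (exists C : R, forall c r, 0 < r -> phi (eball c (2 * r)) <= C * phi (eball c r)) /\
  (exists delta C : R, 0 < delta /\ 0 < C /\
     forall B1 B2, is_eball B1 -> is_eball B2 -> B1 `<=` B2 ->
       phi B1 / phi B2 <= C * powR (vol B1 / vol B2) delta).

Definition morrey_norm {R : realType} (n : nat) (p : R) (phi : set (Rn R n) -> R)
  (w : Rn R n -> R) (f : Rn R n -> R) : \bar R :=
  ereal_sup [set poweR ((phi B)^-1%:E * iint_on B (fun x => (powR `|f x| p * w x)%:E))%E
                       p^-1 | B in @is_eball R n].

Definition morrey_dual_norm {R : realType} (n : nat) (p : R) (phi : set (Rn R n) -> R)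
  (w : Rn R n -> R) (g : Rn R n -> R) : \bar R :=
  ereal_sup [set iint (fun x => (`|f x * g x|)%:E) | f in
     [set f : Rn R n -> R | measurable_fun setT f /\ (morrey_norm p phi w f <= 1)%E]].

Definition chi {R : realType} (n : nat) (B : set (Rn R n)) : Rn R n -> R :=
  fun x => \1_B x.

Definition A_const {R : realType} (n : nat) (p : R) (phi : set (Rn R n) -> R)
  (w : Rn R n -> R) : \bar R :=
  ereal_sup [set (morrey_norm p phi w (chi B) *
                  morrey_dual_norm p phi w (chi B) * (vol B)^-1%:E)%E
            | B in @is_eball R n].

From HB Require Import structures.
From mathcomp Require Import all_boot all_order all_algebra.
From mathcomp Require Import all_classical all_reals all_analysis.
From mathcomp Require Import measurable_realfun ring lra.
Import Order.TTheory GRing.Theory Num.Theory.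
Local Open Scope classical_set_scope.
Local Open Scope ring_scope.

(* Write N_p(B) and D_p(B) for the Morrey norm and the Koethe dual norm of chi_B.
   Since |chi_B|^p = |chi_B|^q, the p-averages of chi_B are its q-averages, so
   N_p(B) <= N_q(B)^(q/p).  If ||f||_{M^p} <= 1 then g = |f|^(p/q) satisfies
   ||g||_{M^q} <= 1, and the pointwise bound |f| <= s + s^(1-p/q) |f|^(p/q)
   gives D_p(B) <= s |B| + s^(1-p/q) D_q(B) for every s > 0.  Taking
   s = (D_q(B)/|B| + 1/N_q(B))^(q/p) yields
   N_p(B) D_p(B) / |B| <= 2 (N_q(B) D_q(B) / |B| + 1)^(q/p),
   hence [w]_{A(M^p)} <= 2 ([w]_{A(M^q)} + 1)^(q/p). *)

Section iterated_integral.
Context {R : realType}.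
Local Open Scope ereal_scope.

Lemma iint_ge0 n (F : n.-tuple R -> \bar R) : (forall x, 0 <= F x) -> 0 <= iint F.
Proof.
elim: n F => [|n IH] F F0 /=; first exact: F0.
by apply: integral_ge0 => x _; apply: IH.
Qed.

Lemma measurable_fun_iint n d (Y : measurableType d) (F : Y * n.-tuple R -> \bar R) :
  measurable_fun setT F -> (forall z, 0 <= F z) ->
  measurable_fun setT (fun y => iint (fun t => F (y, t))).
Proof.
elim: n d Y F => [|n IH] d Y F mF F0 /=.
  by apply: measurableT_comp mF _; apply: measurable_fun_pair.
pose G (z : (Y * measurableTypeR R) * n.-tuple R) :=
  F (z.1.1, [tuple of z.1.2 :: z.2]).
have mG : measurable_fun setT G.
  apply: measurableT_comp mF _; apply: measurable_fun_pair.
    exact: measurableT_comp measurable_fst measurable_fst.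
  apply: (measurable_cons (f := fun z : (Y * measurableTypeR R) * n.-tuple R => z.1.2)).
    exact: measurableT_comp measurable_snd measurable_fst.
  exact: measurable_snd.
apply: (measurable_fun_fubini_tonelli_F _ (IH _ _ G mG (fun z => F0 _))).
by move=> yx; apply: iint_ge0 => t; exact: F0.
Qed.

Lemma measurable_fun_tcons n (F : n.+1.-tuple R -> \bar R) (x : R) :
  measurable_fun setT F ->
  measurable_fun setT (fun t : n.-tuple R => F [tuple of x :: t]).
Proof.
move=> mF; apply: measurableT_comp mF _.
exact: (measurable_cons (f := fun _ : n.-tuple R => x) (g := id)).
Qed.

Lemma measurable_fun_iint_tcons n (F : n.+1.-tuple R -> \bar R) :
  measurable_fun setT F -> (forall z, 0 <= F z) ->
  measurable_fun (T := measurableTypeR R) setT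
    (fun x => iint (fun t : n.-tuple R => F [tuple of x :: t])).
Proof.
move=> mF F0.
pose G (z : measurableTypeR R * n.-tuple R) := F [tuple of z.1 :: z.2].
apply: (@measurable_fun_iint n _ _ G _ (fun z => F0 _)).
apply: measurableT_comp mF _.
apply: (measurable_cons (f := fun z : measurableTypeR R * n.-tuple R => z.1 : R)) => //.
exact: measurableT_comp (@measurable_id _ (measurableTypeR R) setT) measurable_fst.
Qed.

Lemma le_iint n (F G : n.-tuple R -> \bar R) :
  measurable_fun setT F -> measurable_fun setT G ->
  (forall x, 0 <= F x) -> (forall x, F x <= G x) -> iint F <= iint G.
Proof.
elim: n F G => [|n IH] F G mF mG F0 FG /=; first exact: FG.
have G0 x : 0 <= G x by exact: le_trans (F0 x) (FG x).
apply: ge0_le_integral => //.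
- by move=> x _; apply: iint_ge0.
- exact: measurable_fun_iint_tcons.
- exact: measurable_fun_iint_tcons.
- by move=> x _; apply: IH => //; exact: measurable_fun_tcons.
Qed.

Lemma iintD n (F G : n.-tuple R -> \bar R) :
  measurable_fun setT F -> measurable_fun setT G ->
  (forall x, 0 <= F x) -> (forall x, 0 <= G x) ->
  iint (fun x => F x + G x) = iint F + iint G.
Proof.
elim: n F G => [|n IH] F G mF mG F0 G0 //=.
rewrite -ge0_integralD //.
- by apply: eq_integral => x _; apply: IH => //; exact: measurable_fun_tcons.
- by move=> x _; apply: iint_ge0.
- exact: measurable_fun_iint_tcons.
- by move=> x _; apply: iint_ge0.
- exact: measurable_fun_iint_tcons.
Qed.

Lemma iintZl n (k : R) (F : n.-tuple R -> \bar R) : (0 <= k)%R ->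
  measurable_fun setT F -> (forall x, 0 <= F x) ->
  iint (fun x => k%:E * F x) = k%:E * iint F.
Proof.
elim: n F => [|n IH] F k0 mF F0 //=.
rewrite -ge0_integralZl_EFin //.
- by apply: eq_integral => x _; apply: IH => //; exact: measurable_fun_tcons.
- by move=> x _; apply: iint_ge0.
- exact: measurable_fun_iint_tcons.
Qed.

Lemma iint0 n : iint (fun _ : n.-tuple R => 0) = 0.
Proof.
elim: n => [|n IH] //=.
by rewrite (eq_integral (fun _ => 0)) ?integral0 // => x _; exact: IH.
Qed.

End iterated_integral.

Section real_inequalities.
Context {R : realType}.

Lemma powR_norm_indic T (A : set T) (x : T) (a : R) : 0 < a ->
  `|\1_A x| `^ a = \1_A x.
Proof.
move=> a0; rewrite indicE; case: (x \in A) => /=.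
  by rewrite normr1 powR1.
by rewrite normr0 powR0 // gt_eqF.
Qed.

Lemma poweRrM_le (X Y : \bar R) (a b : R) : 0 <= b ->
  (X `^ a <= Y -> X `^ (a * b) <= Y `^ b)%E.
Proof.
move=> b0 XY; rewrite poweRrM; apply: gt0_ler_poweR => //.
  by rewrite in_itv /= poweR_ge0 leey.
by rewrite in_itv /= leey (le_trans (poweR_ge0 _ _) XY).
Qed.

Lemma le_cutoff_powR (a s r : R) : 0 <= a -> 0 < s -> 1 < r ->
  a <= s + s `^ (1 - r) * a `^ r.
Proof.
move=> a0 s0 r1.
have [a_le_s|s_lt_a] := leP a s.
  by apply: ler_wpDr => //; apply: mulr_ge0; apply: powR_ge0.
have a_gt0 : 0 < a by exact: lt_trans s_lt_a.
apply: ler_wpDl; first exact: ltW.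
have r0 : 0 < r by exact: lt_trans ltr01 r1.
rewrite -(mulr_powRB1 a0 r0) -opprB powRN mulrCA ler_pMr //.
rewrite mulrC ler_pdivlMr ?mul1r; last exact: powR_gt0.
by apply: ge0_ler_powR; rewrite ?subr_ge0 ?nnegrE; try exact: ltW.
Qed.

Lemma exists_cutoff_le {N v d r : R} : 0 < N -> 0 < v -> 0 <= d -> 1 < r ->
  exists2 s, 0 < s &
    N `^ r^-1 * (s * v + s `^ (1 - r) * d) / v <= 2 * (N * d / v + 1) `^ r^-1.
Proof.
move=> N0 v0 d0 r1.
have r0 : 0 < r by exact: lt_trans ltr01 r1.
(* This choice makes s^(1-r) d <= s v, so both terms of the sum are at most s v. *)
pose u := d / v + N^-1.
have u0 : 0 < u by apply: ltr_wpDl; [exact: divr_ge0 (ltW v0) | rewrite invr_gt0].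
pose s := u `^ r^-1.
have s0 : 0 < s by exact: powR_gt0.
exists s => //.
have sE : s `^ (1 - r) = s / u.
  rewrite -powRrM; have -> : r^-1 * (1 - r) = r^-1 - 1 by field; rewrite gt_eqF.
  by rewrite powRB ?powRr1 ?(ltW u0) // (gt_eqF u0) implybT.
have d_le : s `^ (1 - r) * d <= s * v.
  rewrite sE -mulrA ler_pM2l // mulrC ler_pdivrMr // /u mulrDr mulrCA divff ?gt_eqF //.
  by rewrite mulr1 lerDl mulr_ge0 ?invr_ge0 ?ltW.
apply: (@le_trans _ _ (N `^ r^-1 * (2 * s * v) / v)).
  rewrite ler_pM2r ?invr_gt0 // ler_pM2l ?powR_gt0 //; lra.
have -> : N `^ r^-1 * (2 * s * v) / v = 2 * (N `^ r^-1 * s).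
  by field; rewrite gt_eqF.
have Nu : N * u = N * d / v + 1 by rewrite /u; field; rewrite !gt_eqF.
by rewrite /s -powRM ?Nu ?(ltW N0) ?(ltW u0).
Qed.

End real_inequalities.

Section integral_cutoff.
Context {R : realType} {n : nat}.
Local Open Scope ereal_scope.

Lemma iint_abs_indic_le (A : set (n.-tuple R)) (f : n.-tuple R -> R) (s r : R) :
  measurable A -> measurable_fun setT f -> (0 < s)%R -> (1 < r)%R ->
  iint (fun x => (`|f x * \1_A x|)%:E) <=
    s%:E * iint_on A (fun _ => 1) +
    (s `^ (1 - r))%:E * iint (fun x => (`| `|f x| `^ r * \1_A x |)%:E).
Proof.
move=> mA mf s0 r1.
have mA1 : measurable_fun setT (fun x => (\1_A x : R)%:E).
  by apply/measurable_EFinP; exact: measurable_indic.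
have mfr : measurable_fun setT (fun x => (`| `|f x| `^ r * \1_A x |)%:E).
  apply/measurable_EFinP; apply: measurableT_comp => //.
  apply: measurable_funM => //.
  apply: (measurableT_comp (@measurable_powR R r)).
  exact: measurableT_comp.
have -> : iint_on A (fun _ => 1) = iint (fun x => (\1_A x : R)%:E).
  by congr iint; apply/funext => x; rewrite mule1.
have s0' : (0 <= s)%R := ltW s0.
have c0 : (0 <= s `^ (1 - r))%R by exact: powR_ge0.
have A1_ge0 x : 0 <= (\1_A x : R)%:E by rewrite lee_fin.
have fr_ge0 x : 0 <= (`| `|f x| `^ r * \1_A x |)%:E by rewrite lee_fin.
have mA1s : measurable_fun setT (fun x => s%:E * (\1_A x : R)%:E).
  exact: emeasurable_funM (measurable_cst _) mA1.
have mfrc : measurable_fun setT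
    (fun x => (s `^ (1 - r))%:E * (`| `|f x| `^ r * \1_A x |)%:E).
  exact: emeasurable_funM (measurable_cst _) mfr.
have A1s_ge0 x : 0 <= s%:E * (\1_A x : R)%:E by rewrite mule_ge0.
have frc_ge0 x : 0 <= (s `^ (1 - r))%:E * (`| `|f x| `^ r * \1_A x |)%:E.
  by rewrite mule_ge0.
rewrite -iintZl // -iintZl // -iintD //.
apply: le_iint => //.
- apply/measurable_EFinP; apply: measurableT_comp => //.
  exact: measurable_funM.
- exact: emeasurable_funD.
- move=> x; rewrite -!EFinM -EFinD lee_fin indicE; case: (x \in A) => /=.
    rewrite !mulr1 (ger0_norm (powR_ge0 _ _)).
    exact: le_cutoff_powR.
  by rewrite !mulr0 normr0 mulr0 addr0.
Qed.

End integral_cutoff.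

Section volume.
Context {R : realType} {n : nat}.

Lemma measurable_eball (c : n.-tuple R) (r : R) : measurable (eball c r).
Proof.
have mf : measurable_fun setT
    (fun x : n.-tuple R => \sum_(i < n) (tnth x i - tnth c i) ^+ 2).
  apply: measurable_sum => i; apply: measurable_funX.
  by apply: measurable_funB; [exact: measurable_tnth | exact: measurable_cst].
by have := mf measurableT `]-oo, r ^+ 2[%classic (measurable_itv _); rewrite setTI.
Qed.

Lemma vol_ge0 (A : set (n.-tuple R)) : 0 <= vol A.
Proof. by apply/fine_ge0/iint_ge0 => x; rewrite mule1 lee_fin. Qed.

Lemma vol_gt0E (A : set (n.-tuple R)) :
  0 < vol A -> iint_on A (fun _ => 1%E) = (vol A)%:E.
Proof.
by rewrite /vol; case: (iint_on A _) => [x| |] //=; rewrite ltxx.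
Qed.

End volume.

Section morrey.
Context {R : realType} {n : nat}.
Variables (w : n.-tuple R -> R) (phi : set (n.-tuple R) -> R).
Local Open Scope ereal_scope.

Definition morrey_mean (p : R) (B : set (n.-tuple R)) (f : n.-tuple R -> R) :=
  (phi B)^-1%:E * iint_on B (fun x => (`|f x| `^ p * w x)%:E).

Lemma morrey_mean_le_norm p B f :
  is_eball B -> morrey_mean p B f `^ p^-1 <= morrey_norm p phi w f.
Proof. by move=> hB; apply: ereal_sup_ubound; exists B. Qed.

Lemma morrey_norm_le p f y :
  (forall B, is_eball B -> morrey_mean p B f `^ p^-1 <= y) ->
  morrey_norm p phi w f <= y.
Proof. by move=> h; apply: ge_ereal_sup => _ [B hB <-]; exact: h. Qed.

Lemma morrey_norm_ge0 p f : 0 <= morrey_norm p phi w f.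
Proof.
have hB : is_eball (eball [tuple (0 : R)%R | _ < n] 1%R).
  by exists [tuple (0 : R)%R | _ < n], 1%R.
exact: le_trans (poweR_ge0 _ _) (morrey_mean_le_norm p _ f hB).
Qed.

Lemma morrey_norm0 p : (0 < p)%R -> morrey_norm p phi w (fun _ => 0%R) = 0.
Proof.
move=> p0; apply/le_anti; rewrite morrey_norm_ge0 andbT.
apply: morrey_norm_le => B _; rewrite /morrey_mean.
have -> : iint_on B (fun x => (`|(0%R : R)| `^ p * w x)%:E) = 0.
  rewrite -(iint0 n); congr iint; apply/funext => x.
  by rewrite normr0 powR0 ?gt_eqF // mul0r mule0.
by rewrite mule0 poweR0r // invr_neq0 // gt_eqF.
Qed.

Lemma morrey_norm_le_poweR a b f g y : (0 < a)%R -> (0 < b)%R ->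
  (forall B, is_eball B -> morrey_mean a B f = morrey_mean b B g) ->
  morrey_norm b phi w g <= y -> morrey_norm a phi w f <= y `^ (b / a).
Proof.
move=> a0 b0 fg gy; apply: morrey_norm_le => B hB.
have ba : (b^-1 * (b / a) = a^-1)%R by rewrite mulrA mulVf ?mul1r // gt_eqF.
rewrite -[X in _ `^ X <= _]ba fg //.
apply: poweRrM_le; first exact: divr_ge0 (ltW b0) (ltW a0).
exact: le_trans (morrey_mean_le_norm _ _ _ hB) gy.
Qed.

Lemma morrey_norm_chi_le p q B : (0 < p)%R -> (0 < q)%R ->
  morrey_norm p phi w (chi B) <= morrey_norm q phi w (chi B) `^ (q / p).
Proof.
move=> p0 q0; apply: morrey_norm_le_poweR => // B' _.
rewrite /morrey_mean /chi; congr (_ * iint_on _ _); apply/funext => x.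
by rewrite !powR_norm_indic.
Qed.

Lemma morrey_dual_norm_ge0 p g : (0 < p)%R -> 0 <= morrey_dual_norm p phi w g.
Proof.
move=> p0; apply: (@le_trans _ _ (iint (fun x => (`|0%R * g x|)%:E))).
  by under eq_fun do rewrite mul0r normr0; rewrite iint0.
apply: ereal_sup_ubound; exists (fun _ => 0%R) => //.
by split; [exact: measurable_cst | rewrite morrey_norm0].
Qed.

Lemma morrey_dual_norm_chi_le p q B : (0 < q)%R -> (q < p)%R ->
  is_eball B -> forall s, (0 < s)%R ->
  morrey_dual_norm p phi w (chi B) <=
    s%:E * iint_on B (fun _ => 1) +
    (s `^ (1 - p / q))%:E * morrey_dual_norm q phi w (chi B).
Proof.
move=> q0 qp hB s s0.
have p0 : (0 < p)%R := lt_trans q0 qp.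
have mB : measurable B by case: hB => c [r [_ ->]]; exact: measurable_eball.
apply: ge_ereal_sup => _ [f [mf Nf] <-].
pose g x := (`|f x| `^ (p / q))%R.
have mg : measurable_fun setT g.
  by apply: (measurableT_comp (@measurable_powR R _)); exact: measurableT_comp.
have Ng : morrey_norm q phi w g <= 1.
  rewrite -(poweR1r (p / q)); apply: (@morrey_norm_le_poweR q p g f) => // B' _.
  rewrite /morrey_mean /g; congr (_ * iint_on _ _); apply/funext => x.
  by rewrite ger0_norm ?powR_ge0 // -powRrM divfK // gt_eqF.
apply: le_trans (iint_abs_indic_le _ _ _ (p / q) mB mf s0 _) _.
  by rewrite ltr_pdivlMr // mul1r.
apply: leeD2l; apply: lee_wpmul2l; first by rewrite lee_fin powR_ge0.
by apply: ereal_sup_ubound; exists g.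
Qed.

Definition A_ball (p : R) (B : set (n.-tuple R)) :=
  morrey_norm p phi w (chi B) * morrey_dual_norm p phi w (chi B) * (vol B)^-1%:E.

Lemma A_ball_le_cutoff {p q B nq dq} : (0 < q)%R -> (q < p)%R -> is_eball B ->
  (0 < vol B)%R -> (0 < nq)%R -> (0 <= dq)%R ->
  morrey_norm q phi w (chi B) = nq%:E -> morrey_dual_norm q phi w (chi B) = dq%:E ->
  A_ball p B <= (2 * (nq * dq / vol B + 1) `^ (q / p))%:E.
Proof.
move=> q0 qp hB v_gt0 nq_gt0 dq_ge0 NqE DqE.
have p0 : (0 < p)%R := lt_trans q0 qp.
have r1 : (1 < p / q)%R by rewrite ltr_pdivlMr // mul1r.
have [s s_gt0] := exists_cutoff_le nq_gt0 v_gt0 dq_ge0 r1.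
rewrite invf_div => hs.
apply: (@le_trans _ _ ((nq `^ (q / p))%:E *
    (s * vol B + s `^ (1 - p / q) * dq)%:E * (vol B)^-1%:E)); last first.
  by rewrite -!EFinM lee_fin.
apply: lee_wpmul2r; first by rewrite lee_fin invr_ge0 ltW.
apply: lee_pmul; [exact: morrey_norm_ge0 | exact: morrey_dual_norm_ge0 | |].
  by rewrite -poweR_EFin -NqE; exact: morrey_norm_chi_le.
rewrite EFinD !EFinM -DqE -vol_gt0E //.
exact: morrey_dual_norm_chi_le.
Qed.

Lemma A_ball_le p q B M : (0 < q)%R -> (q < p)%R -> is_eball B ->
  morrey_norm q phi w (chi B) < +oo -> A_ball q B <= M%:E ->
  A_ball p B <= (2 * (M + 1) `^ (q / p))%:E.
Proof.
move=> q0 qp hB Nq_fin AqM.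
have p0 : (0 < p)%R := lt_trans q0 qp.
have K0 : 0 <= (2 * (M + 1) `^ (q / p))%:E by rewrite lee_fin mulr_ge0 ?powR_ge0.
have [v0|vne0] := eqVneq (vol B) 0%R; first by rewrite /A_ball v0 invr0 mule0.
have v_gt0 : (0 < vol B)%R by rewrite lt_def vne0 vol_ge0.
set nq := fine (morrey_norm q phi w (chi B)).
have NqE : morrey_norm q phi w (chi B) = nq%:E.
  by rewrite fineK // ge0_fin_numE ?morrey_norm_ge0.
have nq_ge0 : (0 <= nq)%R by rewrite -lee_fin -NqE morrey_norm_ge0.
have [nq0|nq_ne0] := eqVneq nq 0%R.
  have Np0 : morrey_norm p phi w (chi B) = 0.
    apply/le_anti; rewrite morrey_norm_ge0 andbT.
    apply: le_trans (morrey_norm_chi_le _ _ _ p0 q0) _.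
    by rewrite NqE nq0 poweR0r // gt_eqF // divr_gt0.
  by rewrite /A_ball Np0 !mul0e.
have nq_gt0 : (0 < nq)%R by rewrite lt_def nq_ne0.
move: AqM (morrey_dual_norm_ge0 _ (chi B) q0); rewrite /A_ball NqE.
case DqE: (morrey_dual_norm q phi w (chi B)) => [dq| |] //=; last first.
  by rewrite gt0_muley ?lte_fin // gt0_mulye ?lte_fin ?invr_gt0 // leye_eq.
rewrite -!EFinM !lee_fin => AqM dq_ge0.
apply: le_trans (A_ball_le_cutoff q0 qp hB v_gt0 nq_gt0 dq_ge0 NqE DqE) _.
have ratio_ge0 : (0 <= nq * dq / vol B)%R by rewrite divr_ge0 ?mulr_ge0 ?vol_ge0.
rewrite lee_fin ler_pM2l //; apply: ge0_ler_powR; first exact: divr_ge0 (ltW q0) (ltW p0).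
- by rewrite nnegrE addr_ge0.
- by rewrite nnegrE addr_ge0 // (le_trans ratio_ge0 AqM).
- by rewrite lerD2r.
Qed.

End morrey.

Theorem proposition2p3 (R : realType) (n : nat) (w : Rn R n -> R)
  (phi : set (Rn R n) -> R) (p q : R) :
  weight w -> phi_admissible phi -> 1 <= q -> q < p ->
  (forall B, is_eball B -> (morrey_norm q phi w (chi B) < +oo)%E) ->
  (forall B, is_eball B -> (morrey_norm p phi w (chi B) < +oo)%E) ->
  (A_const q phi w < +oo)%E -> (A_const p phi w < +oo)%E.
Proof.
move=> _ _ q_ge1 qp Nq_fin _ Aq_fin.
have q0 : 0 < q := lt_le_trans ltr01 q_ge1.
pose M := fine (A_const q phi w).
have AqM : (A_const q phi w <= M%:E)%E.
  by move: Aq_fin; rewrite /M; case: (A_const q phi w) => [a| |] //= _; rewrite leNye.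
apply: (@le_lt_trans _ _ (2 * (M + 1) `^ (q / p))%:E); last exact: ltry.
apply: ge_ereal_sup => _ [B hB <-].
apply: A_ball_le => //; first exact: Nq_fin.
by apply: le_trans AqM; apply: ereal_sup_ubound; exists B.
Qed.
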